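(* Fix any $(2^{nR},2^{nR_f},n)$ code for the wiretap channel with causal state information and secure feedback described in the context, and let $M,X^n,Y^n,Z^n,S^n,K_f^n$ be the induced random variables. Then for each $j\in\{1,\dots,n\}$, \begin{multline*} H(K^{j}_{f}|Z^{j},S^{j})+I(M,X^{j};Y^{j}|K^{j}_{f},Z^{j},S^{j})+H(S^{j}|Z^{j})\\ \le H(K^{j-1}_{f}|Z^{j-1},S^{j-1})+I(M,X^{j-1};Y^{j-1}|K^{j-1}_{f},Z^{j-1},S^{j-1})+H(S^{j-1}|Z^{j-1})\\ +H(K_{j}^{f}|M,X^{j-1},K^{j-1}_{f},Z^{j-1},S^{j-1})+I(X_{j};Y_{j}|Z_{j},S_{j})+H(S_{j}|Z_{j}), \end{multline*} where quantities involving sequences of length $0$ are interpreted with empty sequences.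
   Context: Model: finite alphabets; state $S^n$ i.i.d. $\sim p(s)$; memoryless channel $p(y_i,z_i|x^i,y^{i-1},z^{i-1},s_i)=p(y_i,z_i|x_i,s_i)$, with $Y$ the legitimate output and $Z$ the eavesdropper output. The message $M$ is uniform on $\{1,\dots,2^{nR}\}$ and independent of $S^n$. Feedback symbols $K^f_i$, $i=1,\dots,n$, are generated according to $p(k^f_i|y^{i-1},k_f^{i-1})$, where $K^{i}_f=(K^f_1,\dots,K^f_i)$ denotes the feedback vector (and $K^f_i$ a single symbol); the encoder produces $X_i$ according to $p(x_i|m,x^{i-1},s^i,k_f^i)$. Notation $A^j=(A_1,\dots,A_j)$. *)

From HB Require Import structures.
From mathcomp Require Import all_boot all_order all_algebra.
From mathcomp Require Import reals exp.
Set Implicit Arguments. Unset Strict Implicit. Unset Printing Implicit Defensive.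
Import Order.TTheory GRing.Theory Num.Theory.
Local Open Scope ring_scope.

Section Info.
Variables (R : realType) (T : finType) (P : T -> R).

Definition log2 (x : R) : R := ln x / ln 2.

Definition prob (E : pred T) : R := \sum_(w | E w) P w.

Definition condH (TA TB : eqType) (A : T -> TA) (B : T -> TB) : R :=
  - \sum_w P w *
      log2 (prob (fun w' => (A w' == A w) && (B w' == B w)) /
            prob (fun w' => B w' == B w)).

Definition condMI (TA TB TC : eqType) (A : T -> TA) (B : T -> TB) (C : T -> TC) : R :=
  condH A C - condH A (fun w => (B w, C w)).
End Info.

(* seqpre g^j = (g_1,...,g_j) of a length-n sequence (0-based: g 0,...,g (j-1)) *)
Definition seqpre (n : nat) (A : Type) (g : {ffun 'I_n -> A}) (j : nat) : seq A :=
  [seq g i | i : 'I_n <- enum 'I_n & (i < j)%N].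

Section Code.
Variables (R : realType) (n : nat) (M X Y Z S K : finType).

Definition Omega := (M * {ffun 'I_n -> X} * {ffun 'I_n -> Y} * {ffun 'I_n -> Z}
                       * {ffun 'I_n -> S} * {ffun 'I_n -> K})%type.

Definition msg (w : Omega) : M := w.1.1.1.1.1.
Definition xs (w : Omega) : {ffun 'I_n -> X} := w.1.1.1.1.2.
Definition ys (w : Omega) : {ffun 'I_n -> Y} := w.1.1.1.2.
Definition zs (w : Omega) : {ffun 'I_n -> Z} := w.1.1.2.
Definition ss (w : Omega) : {ffun 'I_n -> S} := w.1.2.
Definition ks (w : Omega) : {ffun 'I_n -> K} := w.2.

(* pS      : state distribution p(s)
   W x s y z : channel p(y,z|x,s)
   f i y^{i} k^{i} k : feedback p(k^f_{i+1} | y^{i}, k_f^{i})   (time i is 0-based)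
   e i m x^{i} s^{i+1} k^{i+1} x : encoder p(x_{i+1} | m, x^{i}, s^{i+1}, k_f^{i+1}) *)
Variables (pS : S -> R) (W : X -> S -> Y -> Z -> R)
          (f : nat -> seq Y -> seq K -> K -> R)
          (e : nat -> M -> seq X -> seq S -> seq K -> X -> R).

Definition joint (w : Omega) : R :=
  (#|M|%:R)^-1 *
  \prod_(i < n)
     (pS (ss w i)
      * f i (seqpre (ys w) i) (seqpre (ks w) i) (ks w i)
      * e i (msg w) (seqpre (xs w) i) (seqpre (ss w) i.+1) (seqpre (ks w) i.+1) (xs w i)
      * W (xs w i) (ss w i) (ys w i) (zs w i)).
End Code.

From mathcomp Require Import all_boot all_order all_algebra.
From mathcomp Require Import reals exp lra ring.
Import Order.TTheory GRing.Theory Num.Theory.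
Local Open Scope ring_scope.

(* Expand every conditional entropy and mutual information into joint
   entropies.  Three conditional independences of the code allow a conditioning
   variable to be replaced by a coarser one: the channel is memoryless,
   (S_j, X_j, Y_j, Z_j) is independent of Y^{j-1} given the encoder's view
   (M, X^{j-1}, K^j, Z^{j-1}, S^{j-1}), and K_j depends on the past only through
   (Y^{j-1}, K^{j-1}).  Each is read off the product form of the joint law by
   summing out all later letters.  After these rewrites the claim is a sum of
   six instances of submodularity H(A,B,C) + H(C) <= H(A,C) + H(B,C), i.e. of
   the nonnegativity of conditional mutual information, which is Gibbs'
   inequality ln x <= x - 1. *)

Set Implicit Arguments. Unset Strict Implicit.

Section Entropy.
Variables (R : realType) (T : finType) (P : T -> R).
Hypothesis P_ge0 : forall w, 0 <= P w.

Definition entropy (TV : eqType) (V : T -> TV) : R :=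
  - \sum_w P w * log2 (prob P (fun w' => V w' == V w)).

Lemma prob_ge0 E : 0 <= prob P E.
Proof. by apply: sumr_ge0 => w _; exact: P_ge0. Qed.

Lemma prob_ge_mass (E : pred T) w : E w -> P w <= prob P E.
Proof.
move=> Ew; rewrite /prob (bigD1 w) //= lerDl; apply: sumr_ge0 => ? _; exact: P_ge0.
Qed.

Lemma prob_gt0 (E : pred T) w : 0 < P w -> E w -> 0 < prob P E.
Proof. by move=> Pw Ew; exact: lt_le_trans Pw (prob_ge_mass Ew). Qed.

Lemma mass_eq0_or_gt0 w : P w = 0 \/ 0 < P w.
Proof. by have := P_ge0 w; rewrite le_eqVlt => /predU1P[<-|]; [left|right]. Qed.

Lemma log2M (x y : R) : 0 < x -> 0 < y -> log2 (x * y) = log2 x + log2 y.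
Proof. by move=> x0 y0; rewrite /log2 lnM ?posrE // mulrDl. Qed.

Lemma log2V (x : R) : 0 < x -> log2 x^-1 = - log2 x.
Proof. by move=> x0; rewrite /log2 lnV ?posrE // mulNr. Qed.

Lemma ln2_gt0 : 0 < ln (2 : R).
Proof. by apply: ln_gt0; rewrite ltr1n. Qed.

Lemma log2_le_ratio (x : R) : 0 < x -> log2 x <= (x - 1) / ln 2.
Proof.
move=> x0; rewrite /log2 ler_pM2r ?invr_gt0 ?ln2_gt0 //.
by have := expR_ge1Dx (ln x); rewrite lnK ?posrE // => ?; lra.
Qed.

Lemma divr_self_le1 (x : R) : x / x <= 1.
Proof. by have [->|x0] := eqVneq x 0; rewrite ?mul0r ?divff. Qed.

Lemma condH_entropy (TA TB : eqType) (A : T -> TA) (B : T -> TB) :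
  condH P A B = entropy (fun w => (A w, B w)) - entropy B.
Proof.
rewrite /condH /entropy opprK addrC -opprB -sumrB; congr (- _).
apply: eq_bigr => w _.
have -> : prob P (fun w' => (A w', B w') == (A w, B w)) =
          prob P (fun w' => (A w' == A w) && (B w' == B w)).
  by apply: eq_bigl => w'; rewrite xpair_eqE.
have [->|Pw] := mass_eq0_or_gt0 w; first by rewrite !mul0r subrr.
have pAB := prob_gt0 (E := fun w' => (A w' == A w) && (B w' == B w)) Pw.
have pB := prob_gt0 (E := fun w' => B w' == B w) Pw.
by rewrite log2M ?log2V ?invr_gt0 ?pAB ?pB ?eqxx // mulrDr mulrN.
Qed.

Lemma eq_entropy (TV TV' : eqType) (V : T -> TV) (V' : T -> TV') :
  (forall w w', (V w' == V w) = (V' w' == V' w)) -> entropy V = entropy V'.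
Proof.
move=> eqV; rewrite /entropy; congr (- _); apply: eq_bigr => w _.
by congr (_ * log2 _); apply: eq_bigl => w'; rewrite eqV.
Qed.

End Entropy.

Section Submodularity.
Variables (R : realType) (T : finType) (P : T -> R).
Hypothesis P_ge0 : forall w, 0 <= P w.
Variables (TA TB TC : eqType) (A : T -> TA) (B : T -> TB) (C : T -> TC).

Let pABC w := prob P (fun w' => (A w' == A w) && (B w' == B w) && (C w' == C w)).
Let pAC w := prob P (fun w' => (A w' == A w) && (C w' == C w)).
Let pBC w := prob P (fun w' => (B w' == B w) && (C w' == C w)).
Let pC w := prob P (fun w' => C w' == C w).
Let ratio w := pAC w * pBC w / (pABC w * pC w).

Lemma mass_ratio_double_sum w :
  P w * ratio w =
  \sum_w1 \sum_w2 (if [&& A w1 == A w, C w1 == C w, B w2 == B w & C w2 == C w]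
                   then P w1 * P w2 * (P w / (pABC w * pC w)) else 0).
Proof.
rewrite /ratio /pAC /pBC /prob.
rewrite (big_mkcond (fun i => (A i == A w) && _)).
rewrite (big_mkcond (fun i => (B i == B w) && _)) /= mulrC -!mulrA.
rewrite mulr_suml; apply: eq_bigr => w1 _.
rewrite mulr_suml mulr_sumr; apply: eq_bigr => w2 _.
case: (A w1 == A w); case: (C w1 == C w); case: (B w2 == B w);
  case: (C w2 == C w) => /=; rewrite ?(mul0r, mulr0) //.
by rewrite !mulrA mulrAC.
Qed.

(* Only the cell of [(A w1, B w2, C w1)] contributes, and it contributes its
   own mass divided by itself. *)
Lemma sum_ratio_cell_le w1 w2 :
  \sum_w (if [&& A w1 == A w, C w1 == C w, B w2 == B w & C w2 == C w]
          then P w1 * P w2 * (P w / (pABC w * pC w)) else 0)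
  <= (if C w2 == C w1 then P w1 * P w2 / pC w1 else 0).
Proof.
have [hc|hc] := eqVneq (C w2) (C w1); last first.
  rewrite big1 // => w _.
  case: (C w1 =P C w) => [h1|]; last by rewrite !andbF.
  case: (C w2 =P C w) => [h2|]; last by rewrite !andbF.
  by move: hc; rewrite h1 h2 eqxx.
set q := prob P (fun w' => (A w' == A w1) && (B w' == B w2) && (C w' == C w1)).
have -> : \sum_w (if [&& A w1 == A w, C w1 == C w, B w2 == B w & C w2 == C w]
      then P w1 * P w2 * (P w / (pABC w * pC w)) else 0) =
      \sum_(w | (A w == A w1) && (B w == B w2) && (C w == C w1))
         (P w1 * P w2 / pC w1 * (P w / q)).
  rewrite [in RHS]big_mkcond; apply: eq_bigr => w _; rewrite hc.
  rewrite [A w1 == _]eq_sym [B w2 == _]eq_sym [C w1 == _]eq_sym.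
  case: (A w =P A w1) => [ha|_] //=.
  case: (C w =P C w1) => [hcw|_] //=; rewrite ?andbF //.
  case: (B w =P B w2) => [hb|_] //=.
  by rewrite /pABC /pC ha hb hcw -/q invfM; ring.
rewrite -mulr_sumr -mulr_suml -/q -[X in _ <= X]mulr1 ler_wpM2l ?divr_self_le1 //.
by rewrite mulr_ge0 ?invr_ge0 ?prob_ge0 ?mulr_ge0.
Qed.

Lemma sum_mass_ratio_le : \sum_w P w * ratio w <= \sum_w P w.
Proof.
under eq_bigr do rewrite mass_ratio_double_sum.
rewrite (exchange_big _ _ _ _ _ (fun w w1 => \sum_w2 _)).
under eq_bigr do rewrite exchange_big.
apply: (le_trans (y := \sum_w1 \sum_w2
  (if C w2 == C w1 then P w1 * P w2 / pC w1 else 0))).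
  by apply: ler_sum => w1 _; apply: ler_sum => w2 _; exact: sum_ratio_cell_le.
apply: ler_sum => w1 _.
rewrite -big_mkcond /=; under eq_bigr do rewrite mulrAC.
rewrite -mulr_sumr -mulrA [X in _ * (_ * X)](_ : _ = pC w1) // mulrC.
by rewrite -[X in _ <= X]mul1r ler_wpM2r // mulrC; exact: divr_self_le1.
Qed.

(* Gibbs: [log2 ratio <= (ratio - 1) / ln 2], and the weighted ratios sum to at
   most the total mass. *)
Lemma entropy_submod :
  entropy P (fun w => (A w, B w, C w)) + entropy P C <=
  entropy P (fun w => (A w, C w)) + entropy P (fun w => (B w, C w)).
Proof.
have cells_gt0 w : 0 < P w ->
    [/\ 0 < pABC w, 0 < pAC w, 0 < pBC w & 0 < pC w].
  by move=> Pw; split; apply: (prob_gt0 P_ge0 Pw); rewrite !eqxx.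
have ratio_gt0 w : 0 < P w -> 0 < ratio w.
  by move=> /cells_gt0[*]; rewrite /ratio !(mulr_gt0, invr_gt0).
have log2_ratio w : 0 < P w ->
    log2 (ratio w) = log2 (pAC w) + log2 (pBC w) - log2 (pABC w) - log2 (pC w).
  move=> /cells_gt0[g1 g2 g3 g4].
  rewrite /ratio log2M ?(mulr_gt0, invr_gt0) // log2V ?mulr_gt0 // !log2M //; lra.
have gibbs : \sum_w P w * log2 (ratio w) <= 0.
  apply: (le_trans (y := \sum_w (P w * ratio w - P w) / ln 2)).
    apply: ler_sum => w _.
    have [->|Pw] := mass_eq0_or_gt0 P_ge0 w; first by rewrite !mul0r subrr mul0r.
    have -> : (P w * ratio w - P w) / ln 2 = P w * ((ratio w - 1) / ln 2) by ring.
    by rewrite ler_wpM2l ?P_ge0 // log2_le_ratio ?ratio_gt0.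
  rewrite -mulr_suml sumrB mulr_le0_ge0 ?subr_le0 ?sum_mass_ratio_le //.
  by rewrite invr_ge0 ltW ?ln2_gt0.
have expand : \sum_w P w * log2 (ratio w) =
    \sum_w P w * log2 (pAC w) + \sum_w P w * log2 (pBC w)
    - \sum_w P w * log2 (pABC w) - \sum_w P w * log2 (pC w).
  rewrite -big_split -!sumrB /=; apply: eq_bigr => w _.
  have [->|Pw] := mass_eq0_or_gt0 P_ge0 w; first by rewrite !mul0r; lra.
  by rewrite log2_ratio //; ring.
rewrite /entropy; move: gibbs; rewrite expand.
rewrite -/pC; lra.
Qed.
End Submodularity.

Lemma if_sumr (R : nmodType) (I : finType) (c : bool) (G : I -> R) :
  (if c then \sum_i G i else 0) = \sum_i (if c then G i else 0).
Proof. by case: c; rewrite // big1. Qed.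

Lemma sum_pair (R : nmodType) (A B : finType) (F : A * B -> R) :
  \sum_p F p = \sum_a \sum_b F (a, b).
Proof. by rewrite (pair_bigA _ (fun a b => F (a, b))); apply: eq_bigr => -[]. Qed.

Lemma sum_pair_fst (R : nmodType) (A B : finType) (F : A * B -> R) a :
  \sum_(p | p.1 == a) F p = \sum_b F (a, b).
Proof.
rewrite -(@big_pred1_eq R 0 +%R A a (fun a' => \sum_b F (a', b))) pair_big.
by apply: eq_big => [[a' b]|[a' b] _] //=; rewrite andbT.
Qed.

(* If the conditional law of [A] given a fine observation [F] only depends on a
   coarser observation [C], then it is also the law of [A] given [C]. *)
Section CoarserConditioning.
Variables (R : realType) (T : finType) (P : T -> R).
Hypothesis P_ge0 : forall w, 0 <= P w.
Variables (TA TF TC : eqType) (A : T -> TA) (F : T -> TF) (C : T -> TC).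
Variable law : TA -> T -> R.
Hypothesis F_finer : forall w w', F w' == F w -> C w' == C w.
Hypothesis law_C : forall a w w', C w' == C w -> law a w' = law a w.
Hypothesis prob_AF :
  forall a w, prob P (fun w' => (A w' == a) && (F w' == F w))
              = law a w * prob P (fun w' => F w' == F w).

Let pF w := prob P (fun w' => F w' == F w).

Lemma prob_coarsen a w0 :
  prob P (fun w' => (A w' == a) && (C w' == C w0))
  = law a w0 * prob P (fun w' => C w' == C w0).
Proof.
have -> : law a w0 * prob P (fun w' => C w' == C w0) =
    \sum_(w | C w == C w0) P w / pF w * prob P (fun w' => (A w' == a) && (F w' == F w)).
  rewrite {1}/prob mulr_sumr; apply: eq_bigr => w hw.
  rewrite -(law_C a hw) prob_AF.
  have [->|Pw] := mass_eq0_or_gt0 P_ge0 w; first by rewrite !(mul0r, mulr0).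
  have g : 0 < pF w by apply: (prob_gt0 P_ge0 Pw); rewrite eqxx.
  by rewrite /pF; field; exact: lt0r_neq0 g.
rewrite /prob; apply/esym.
under eq_bigr do rewrite mulr_sumr.
rewrite big_mkcond /=.
under eq_bigr do rewrite big_mkcond /= if_sumr.
rewrite exchange_big /= [in RHS]big_mkcond /=; apply: eq_bigr => w' _.
have [Pw'0|Pw'] := mass_eq0_or_gt0 P_ge0 w'.
  by rewrite Pw'0 big1 ?if_same // => w _; rewrite !mulr0 !if_same.
have g : 0 < pF w' by apply: (prob_gt0 P_ge0 Pw'); rewrite eqxx.
case: (A w' =P a) => [ha|_] /=; last by rewrite big1 // => w _; rewrite !if_same.
have -> : \sum_w (if C w == C w0 then if F w' == F w then P w / pF w * P w' else 0 else 0)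
   = \sum_w (if C w' == C w0 then (if F w == F w' then P w / pF w' * P w' else 0) else 0).
  apply: eq_bigr => w _.
  case: (F w' =P F w) => [hf|hf]; last first.
    by rewrite [F w == _]eq_sym; case: (F w' =P F w) => [/hf []|_]; rewrite !if_same.
  have /eqP hc := F_finer (w := w) (w' := w') (introT eqP hf).
  by rewrite /pF -hc hf eqxx.
case: (C w' =P C w0) => _ /=; last by rewrite big1.
rewrite -big_mkcond /= -mulr_suml -mulr_suml.
by rewrite -/(prob P (fun w => F w == F w')) -/(pF w') mulfV ?mul1r ?lt0r_neq0.
Qed.

Lemma condH_coarsen : condH P A F = condH P A C.
Proof.
rewrite /condH; congr (- _); apply: eq_bigr => w _.
have [->|Pw] := mass_eq0_or_gt0 P_ge0 w; first by rewrite !mul0r.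
congr (_ * log2 _).
have g1 : 0 < pF w by apply: (prob_gt0 P_ge0 Pw); rewrite eqxx.
have g2 : 0 < prob P (fun w' => C w' == C w) by apply: (prob_gt0 P_ge0 Pw); rewrite eqxx.
by rewrite prob_AF prob_coarsen !mulfK ?lt0r_neq0.
Qed.
End CoarserConditioning.

Lemma condH_coarsen_kernel (R : realType) (T : finType) (P : T -> R)
    (TA : finType) (TF TC : eqType) (A : T -> TA) (F : T -> TF) (C : T -> TC)
    (law : TA -> T -> R) (weight : T -> R) :
  (forall w, 0 <= P w) ->
  (forall w w', F w' == F w -> C w' == C w) ->
  (forall a w w', C w' == C w -> law a w' = law a w) ->
  (forall w, \sum_a law a w = 1) ->
  (forall a w, prob P (fun w' => (A w' == a) && (F w' == F w)) = law a w * weight w) ->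
  condH P A F = condH P A C.
Proof.
move=> P_ge0 F_finer law_C law_sum prob_AF.
apply: (condH_coarsen P_ge0 (law := law)) => // a w.
have -> : prob P (fun w' => F w' == F w) = weight w.
  rewrite /prob (partition_big A predT) //=.
  rewrite -[RHS]mul1r -(law_sum w) mulr_suml; apply: eq_bigr => a' _.
  by rewrite -prob_AF /prob; apply: eq_bigl => w'; rewrite andbC.
exact: prob_AF.
Qed.

Section Prefixes.
Variable n : nat.

Definition ord_prefix (j : nat) : seq 'I_n := [seq i : 'I_n <- enum 'I_n | (i < j)%N].

Lemma seqpreE (A : Type) (g : {ffun 'I_n -> A}) j : seqpre g j = map g (ord_prefix j).
Proof. by []. Qed.

Lemma val_ord_prefix j : (j <= n)%N -> map val (ord_prefix j) = iota 0 j.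
Proof.
move=> hj; rewrite /ord_prefix -(filter_map val (fun x => (x < j)%N)) val_enum_ord.
by have := filter_iota_ltn 0 hj; rewrite add0n.
Qed.

Lemma ord_prefixS (t : 'I_n) : ord_prefix t.+1 = rcons (ord_prefix t) t.
Proof.
apply: (inj_map val_inj); rewrite map_rcons (val_ord_prefix (ltn_ord t)).
by rewrite (val_ord_prefix (ltnW (ltn_ord t))) -addn1 iotaD add0n cats1.
Qed.

Lemma seqpreS (A : Type) (g : {ffun 'I_n -> A}) (t : 'I_n) :
  seqpre g t.+1 = rcons (seqpre g t) (g t).
Proof. by rewrite !seqpreE ord_prefixS map_rcons. Qed.

Lemma eq_seqpre_n (A : eqType) (g g' : {ffun 'I_n -> A}) :
  (seqpre g n == seqpre g' n) = (g == g').
Proof.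
apply/eqP/eqP => [|-> //]; rewrite !seqpreE.
have -> : ord_prefix n = enum 'I_n.
  by apply/all_filterP/allP => k _; exact: ltn_ord.
by move/eq_in_map => eq_gg'; apply/ffunP => i; apply: eq_gg'; exact: mem_enum.
Qed.

Definition ffun_upd (t : 'I_n) (A : Type) (g : {ffun 'I_n -> A}) (a : A) :
  {ffun 'I_n -> A} := [ffun i => if i == t then a else g i].

Lemma ffun_upd_at (t : 'I_n) (A : Type) (g : {ffun 'I_n -> A}) a : ffun_upd t g a t = a.
Proof. by rewrite ffunE eqxx. Qed.

Lemma ffun_upd_lt (t i : 'I_n) (A : Type) (g : {ffun 'I_n -> A}) a :
  (i < t)%N -> ffun_upd t g a i = g i.
Proof.
by move=> lt_it; rewrite ffunE; case: eqP => // eq_it; rewrite eq_it ltnn in lt_it.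
Qed.

Lemma seqpre_upd (t : 'I_n) (A : Type) (g : {ffun 'I_n -> A}) a j :
  (j <= t)%N -> seqpre (ffun_upd t g a) j = seqpre g j.
Proof.
move=> le_jt; rewrite !seqpreE; apply/eq_in_map => i; rewrite mem_filter => /andP[lt_ij _].
exact/ffun_upd_lt/(leq_trans lt_ij).
Qed.
End Prefixes.

Ltac split_eqs :=
  try done;
  first [case: eqP => _ /=; rewrite ?(andbT, andbF, andTb, andFb) //; split_eqs | idtac].

Section Code.
Variables (R : realType) (n : nat) (M X Y Z S K : finType).
Variables (pS : S -> R) (W : X -> S -> Y -> Z -> R)
  (f : nat -> seq Y -> seq K -> K -> R)
  (e : nat -> M -> seq X -> seq S -> seq K -> X -> R).
Hypotheses (pS_ge0 : forall s, 0 <= pS s) (pS_sum : \sum_s pS s = 1)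
  (W_ge0 : forall x s y z, 0 <= W x s y z)
  (W_sum : forall x s, \sum_y \sum_z W x s y z = 1)
  (f_ge0 : forall i ys ks k, 0 <= f i ys ks k)
  (f_sum : forall i ys ks, \sum_k f i ys ks k = 1)
  (e_ge0 : forall i m xs ss ks x, 0 <= e i m xs ss ks x)
  (e_sum : forall i m xs ss ks, \sum_x e i m xs ss ks x = 1).

Local Notation Om := (Omega n M X Y Z S K).
Local Notation P := (@joint R n M X Y Z S K pS W f e).

Definition step_factor (i : 'I_n) (w : Om) : R :=
  pS (ss w i)
  * f i (seqpre (ys w) i) (seqpre (ks w) i) (ks w i)
  * e i (msg w) (seqpre (xs w) i) (seqpre (ss w) i.+1) (seqpre (ks w) i.+1) (xs w i)
  * W (xs w i) (ss w i) (ys w i) (zs w i).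

Definition prefix_mass (j : nat) (w : Om) : R :=
  (#|M|%:R)^-1 * \prod_(i < n | (i < j)%N) step_factor i w.

Definition past (j : nat) (w : Om) :=
  (msg w, seqpre (xs w) j, seqpre (ys w) j, seqpre (zs w) j, seqpre (ss w) j,
   seqpre (ks w) j).

Definition Letters := (K * (S * (X * (Y * Z))))%type.

Definition letters (t : 'I_n) (w : Om) : Letters :=
  (ks w t, (ss w t, (xs w t, (ys w t, zs w t)))).

Definition set_letters (t : 'I_n) (w : Om) (v : Letters) : Om :=
  (msg w, ffun_upd t (xs w) v.2.2.1, ffun_upd t (ys w) v.2.2.2.1,
   ffun_upd t (zs w) v.2.2.2.2, ffun_upd t (ss w) v.2.1, ffun_upd t (ks w) v.1).

Lemma joint_ge0 w : 0 <= P w.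
Proof.
rewrite /joint mulr_ge0 ?invr_ge0 ?ler0n //; apply: prodr_ge0 => i _.
by rewrite !mulr_ge0.
Qed.

Lemma joint_prefix_mass w : P w = prefix_mass n w.
Proof.
by rewrite /joint /prefix_mass; congr (_ * _); apply: eq_bigl => i; rewrite ltn_ord.
Qed.

Lemma prefix_massS (t : 'I_n) w : prefix_mass t.+1 w = prefix_mass t w * step_factor t w.
Proof.
rewrite /prefix_mass -mulrA; congr (_ * _).
rewrite (bigD1 t) ?ltnSn //= mulrC; congr (_ * _); apply: eq_bigl => i.
by rewrite ltnS ltn_neqAle val_eqE andbC.
Qed.

Lemma prefix_mass_set_letters (t : 'I_n) w v j :
  (j <= t)%N -> prefix_mass j (set_letters t w v) = prefix_mass j w.
Proof.
move=> le_jt; rewrite /prefix_mass; congr (_ * _); apply: eq_bigr => i lt_ij.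
have lt_it := leq_trans lt_ij le_jt.
by rewrite /step_factor /= !seqpre_upd ?(ltnW lt_it) // !ffun_upd_lt.
Qed.

Lemma step_factor_set_letters (t : 'I_n) w v : step_factor t (set_letters t w v) =
  pS v.2.1 * f t (seqpre (ys w) t) (seqpre (ks w) t) v.1 *
  e t (msg w) (seqpre (xs w) t) (rcons (seqpre (ss w) t) v.2.1)
      (rcons (seqpre (ks w) t) v.1) v.2.2.1 * W v.2.2.1 v.2.1 v.2.2.2.1 v.2.2.2.2.
Proof. by rewrite /step_factor /= !seqpreS !seqpre_upd // !ffun_upd_at. Qed.

Lemma sum_channel c x s : \sum_y \sum_z (c * W x s y z) = c.
Proof.
rewrite -[RHS]mulr1 -(W_sum x s) mulr_sumr; apply: eq_bigr => y _.
by rewrite mulr_sumr.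
Qed.

Lemma sum_step_factor_feedback (t : 'I_n) w k :
  \sum_(r : S * (X * (Y * Z))) step_factor t (set_letters t w (k, r))
  = f t (seqpre (ys w) t) (seqpre (ks w) t) k.
Proof.
under eq_bigr do rewrite step_factor_set_letters /=.
rewrite sum_pair; under eq_bigr do rewrite sum_pair.
under eq_bigr do under eq_bigr do rewrite sum_pair /= sum_channel.
under eq_bigr do rewrite -mulr_sumr e_sum mulr1.
by rewrite -mulr_suml pS_sum mul1r.
Qed.

Lemma sum_step_factor (t : 'I_n) w : \sum_v step_factor t (set_letters t w v) = 1.
Proof.
by rewrite sum_pair; under eq_bigr do rewrite sum_step_factor_feedback; exact: f_sum.
Qed.

Lemma eq_past_set_lettersS (t : 'I_n) w v w' :
  (past t.+1 w' == past t.+1 (set_letters t w v))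
  = (past t w' == past t w) && (letters t w' == v).
Proof.
case: v => k [s [x [y z]]].
rewrite /past /letters /= !seqpreS !seqpre_upd // !ffun_upd_at !xpair_eqE !eqseq_rcons.
split_eqs.
Qed.

Lemma eq_past_n (w w' : Om) : (past n w' == past n w) = (w' == w).
Proof.
case: w => [[[[[m1 x1] y1] z1] s1] k1]; case: w' => [[[[[m2 x2] y2] z2] s2] k2].
by rewrite /past /= !xpair_eqE !eq_seqpre_n.
Qed.

(* Induction on [n - j]: summing out the letters at time [j] multiplies the mass
   by [sum_step_factor = 1]. *)
Lemma prob_past j : (j <= n)%N ->
  forall w, prob P (fun w' => past j w' == past j w) = prefix_mass j w.
Proof.
move=> le_jn; have [k] : exists k, (j + k = n)%N by exists (n - j)%N; rewrite subnKC.
elim: k j le_jn => [|k IH] j le_jn jk w.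
  rewrite addn0 in jk; subst j.
  by rewrite /prob (big_pred1 w) ?joint_prefix_mass // => w'; exact: eq_past_n.
have lt_jn : (j < n)%N by rewrite -jk -addSnnS leq_addr.
pose t := Ordinal lt_jn; rewrite -[j]/(val t) /prob (partition_big (letters t) predT) //=.
rewrite -[RHS]mulr1 -(sum_step_factor t w) mulr_sumr; apply: eq_bigr => v _.
rewrite -(prefix_mass_set_letters w v (leqnn t)) -prefix_massS -IH ?addSnnS //.
by apply: eq_bigl => w'; rewrite eq_past_set_lettersS.
Qed.

Lemma prob_past_letters (t : 'I_n) w v :
  prob P (fun w' => (past t w' == past t w) && (letters t w' == v))
  = prefix_mass t w * step_factor t (set_letters t w v).
Proof.
rewrite -(prefix_mass_set_letters w v (leqnn t)) -prefix_massS -prob_past //.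
by apply: eq_bigl => w'; rewrite eq_past_set_lettersS.
Qed.

Lemma condH_channel_memoryless (t : 'I_n) :
  condH P (fun w => (ys w t, zs w t)) (fun w => (past t w, ks w t, ss w t, xs w t))
  = condH P (fun w => (ys w t, zs w t)) (fun w => (xs w t, ss w t)).
Proof.
apply: (condH_coarsen_kernel (law := fun a w => W (xs w t) (ss w t) a.1 a.2)
  (weight := fun w => prefix_mass t w * (pS (ss w t)
     * f t (seqpre (ys w) t) (seqpre (ks w) t) (ks w t)
     * e t (msg w) (seqpre (xs w) t) (rcons (seqpre (ss w) t) (ss w t))
         (rcons (seqpre (ks w) t) (ks w t)) (xs w t)))) => //.
- exact: joint_ge0.
- by move=> w w' /=; rewrite !xpair_eqE; split_eqs.
- by move=> a w w' /=; rewrite xpair_eqE => /andP[/eqP-> /eqP->].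
- by move=> w; rewrite sum_pair; exact: W_sum.
move=> [y z] w.
rewrite [LHS](_ : _ = prob P (fun w' => (past t w' == past t w) &&
     (letters t w' == (ks w t, (ss w t, (xs w t, (y, z))))))); last first.
  by apply: eq_bigl => w'; rewrite /letters !xpair_eqE; split_eqs.
by rewrite prob_past_letters step_factor_set_letters /=; ring.
Qed.

(* The state is i.i.d. and the encoder does not see [Y^t]. *)
Lemma condH_letters_encoder_view (t : 'I_n) :
  condH P (fun w => (ss w t, xs w t, ys w t, zs w t)) (fun w => (past t w, ks w t))
  = condH P (fun w => (ss w t, xs w t, ys w t, zs w t))
      (fun w => (msg w, seqpre (xs w) t, seqpre (ks w) t, seqpre (zs w) t,
                 seqpre (ss w) t, ks w t)).
Proof.
apply: (condH_coarsen_kernel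
  (law := fun a w => pS a.1.1.1
     * e t (msg w) (seqpre (xs w) t) (rcons (seqpre (ss w) t) a.1.1.1)
         (rcons (seqpre (ks w) t) (ks w t)) a.1.1.2
     * W a.1.1.2 a.1.1.1 a.1.2 a.2)
  (weight := fun w => prefix_mass t w * f t (seqpre (ys w) t) (seqpre (ks w) t) (ks w t))).
- exact: joint_ge0.
- by move=> w w' /=; rewrite /past !xpair_eqE; split_eqs.
- move=> a w w' /=; rewrite !xpair_eqE.
  by move=> /andP[/andP[/andP[/andP[/andP[/eqP-> /eqP->] /eqP->] _] /eqP->] /eqP->].
- move=> w; rewrite !sum_pair /=.
  under eq_bigr do under eq_bigr do rewrite sum_channel.
  by under eq_bigr do rewrite -mulr_sumr e_sum mulr1; exact: pS_sum.
move=> [[[s x] y] z] w.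
rewrite [LHS](_ : _ = prob P (fun w' => (past t w' == past t w) &&
     (letters t w' == (ks w t, (s, (x, (y, z))))))); last first.
  by apply: eq_bigl => w'; rewrite /letters !xpair_eqE; split_eqs.
by rewrite prob_past_letters step_factor_set_letters /=; ring.
Qed.

(* Feedback is generated from [(Y^t, K^t)] alone. *)
Lemma condH_feedback_causal (t : 'I_n) :
  condH P (fun w => ks w t) (past t)
  = condH P (fun w => ks w t)
      (fun w => (seqpre (ys w) t, seqpre (ks w) t, seqpre (zs w) t, seqpre (ss w) t)).
Proof.
apply: (condH_coarsen_kernel
  (law := fun a w => f t (seqpre (ys w) t) (seqpre (ks w) t) a) (weight := prefix_mass t)).
- exact: joint_ge0.
- by move=> w w' /=; rewrite /past !xpair_eqE; split_eqs.
- by move=> a w w' /=; rewrite !xpair_eqE => /andP[/andP[/andP[/eqP-> /eqP->] _] _].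
- by move=> w; exact: f_sum.
move=> a w.
rewrite /prob (partition_big (letters t) (fun v : Letters => v.1 == a)) /=; last first.
  by move=> w' /andP[].
rewrite mulrC -(sum_step_factor_feedback t w a).
have -> : \sum_r step_factor t (set_letters t w (a, r))
          = \sum_(v : Letters | v.1 == a) step_factor t (set_letters t w v).
  by rewrite sum_pair_fst.
rewrite mulr_sumr.
apply: eq_bigr => -[k r] /= /eqP ->.
rewrite -prob_past_letters /prob; apply: eq_bigl => w'.
by rewrite /letters !xpair_eqE; split_eqs.
Qed.
End Code.

(* A joint entropy only depends on the partition its variable induces
   ([eq_entropy]).  Every variable below is a tuple drawn from the eleven
   coordinates [M, X^t, Y^t, Z^t, S^t, K^t, X_t, Y_t, Z_t, S_t, K_t]; it is
   normalised to the option-tuple recording which coordinates it observes, so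
   that equal entropies become syntactically equal for [lra]. *)
Definition observed (n : nat) (M X Y Z S K : finType) (t : 'I_n)
    (b1 b2 b3 b4 b5 b6 b7 b8 b9 b10 b11 : bool) (w : Omega n M X Y Z S K) :=
  (if b1 then Some (msg w) else None,
   if b2 then Some (seqpre (xs w) t) else None,
   if b3 then Some (seqpre (ys w) t) else None,
   if b4 then Some (seqpre (zs w) t) else None,
   if b5 then Some (seqpre (ss w) t) else None,
   if b6 then Some (seqpre (ks w) t) else None,
   if b7 then Some (xs w t) else None,
   if b8 then Some (ys w t) else None,
   if b9 then Some (zs w t) else None,
   if b10 then Some (ss w t) else None,
   if b11 then Some (ks w t) else None).

Ltac observed_of t V :=
  let has_msg := match V with context [msg] => constr:(true) | _ => constr:(false) end in
  let has_prefix g :=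
    match V with
    | context [@seqpre _ _ (g _ _ _ _ _ _ _ _) _] => constr:(true)
    | _ => constr:(false) end in
  let has_letter g :=
    match V with
    | context [@seqpre _ _ (g _ _ _ _ _ _ _ _) (_.+1)] => constr:(true)
    | context [@fun_of_fin _ _ _ (g _ _ _ _ _ _ _ _) _] => constr:(true)
    | _ => constr:(false) end in
  let b2 := has_prefix (@xs) in let b3 := has_prefix (@ys) in
  let b4 := has_prefix (@zs) in let b5 := has_prefix (@ss) in
  let b6 := has_prefix (@ks) in
  let b7 := has_letter (@xs) in let b8 := has_letter (@ys) in
  let b9 := has_letter (@zs) in let b10 := has_letter (@ss) in
  let b11 := has_letter (@ks) in
  uconstr:(observed t has_msg b2 b3 b4 b5 b6 b7 b8 b9 b10 b11).

Ltac same_fibers :=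
  move=> ? ?; rewrite /observed /past /= ?seqpreS ?xpair_eqE ?eqseq_rcons;
  rewrite ?(inj_eq Some_inj) ?eqxx /= ?(andbT, andTb); split_eqs.

Ltac normalize_entropies t :=
  repeat match goal with |- context [entropy ?P ?V] =>
    lazymatch V with context [@observed] => fail | _ => idtac end;
    let V' := observed_of t V in
    rewrite (@eq_entropy _ _ P _ _ V V'); last (by same_fibers)
  end.

Unset Implicit Arguments.
(* j : 'I_n is 0-based; the paper's index is j+1, so A^{j+1} = seqpre A (j.+1),
   A^{j} = seqpre A j, and the single letter A_{j+1} is A j. *)
Theorem lemma1 (R : realType) (n : nat) (M X Y Z S K : finType)
  (pS : S -> R) (W : X -> S -> Y -> Z -> R)
  (f : nat -> seq Y -> seq K -> K -> R)
  (e : nat -> M -> seq X -> seq S -> seq K -> X -> R)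
  (hM : (0 < #|M|)%N)
  (pS_ge0 : forall s, 0 <= pS s) (pS_sum : \sum_s pS s = 1)
  (W_ge0 : forall x s y z, 0 <= W x s y z)
  (W_sum : forall x s, \sum_y \sum_z W x s y z = 1)
  (f_ge0 : forall i ys ks k, 0 <= f i ys ks k)
  (f_sum : forall i ys ks, \sum_k f i ys ks k = 1)
  (e_ge0 : forall i m xs ss ks x, 0 <= e i m xs ss ks x)
  (e_sum : forall i m xs ss ks, \sum_x e i m xs ss ks x = 1)
  (j : 'I_n) :
  let P := @joint R n M X Y Z S K pS W f e in
  condH P (fun w => seqpre (ks w) j.+1)
          (fun w => (seqpre (zs w) j.+1, seqpre (ss w) j.+1))
  + condMI P (fun w => (msg w, seqpre (xs w) j.+1)) (fun w => seqpre (ys w) j.+1)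
          (fun w => (seqpre (ks w) j.+1, seqpre (zs w) j.+1, seqpre (ss w) j.+1))
  + condH P (fun w => seqpre (ss w) j.+1) (fun w => seqpre (zs w) j.+1)
  <=
  condH P (fun w => seqpre (ks w) j)
          (fun w => (seqpre (zs w) j, seqpre (ss w) j))
  + condMI P (fun w => (msg w, seqpre (xs w) j)) (fun w => seqpre (ys w) j)
          (fun w => (seqpre (ks w) j, seqpre (zs w) j, seqpre (ss w) j))
  + condH P (fun w => seqpre (ss w) j) (fun w => seqpre (zs w) j)
  + condH P (fun w => ks w j)
          (fun w => (msg w, seqpre (xs w) j, seqpre (ks w) j, seqpre (zs w) j, seqpre (ss w) j))
  + condMI P (fun w => xs w j) (fun w => ys w j) (fun w => (zs w j, ss w j))
  + condH P (fun w => ss w j) (fun w => zs w j).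
Proof.
rewrite /=; set P := joint pS W f e.
have P_ge0 : forall w, 0 <= P w := joint_ge0 pS_ge0 W_ge0 f_ge0 e_ge0.
have channel := condH_channel_memoryless pS_ge0 pS_sum W_ge0 W_sum f_ge0 f_sum e_ge0 e_sum j.
have encoder := condH_letters_encoder_view pS_ge0 pS_sum W_ge0 W_sum f_ge0 f_sum e_ge0 e_sum j.
have feedback := condH_feedback_causal pS_ge0 pS_sum W_ge0 W_sum f_ge0 f_sum e_ge0 e_sum j.
have mi_Zt_past := entropy_submod P_ge0 (fun w => zs w j)
  (fun w => (seqpre (ys w) j, seqpre (ks w) j, seqpre (ss w) j, ks w j))
  (fun w => seqpre (zs w) j).
have mi_YSt_past := entropy_submod P_ge0 (fun w => (ys w j, ss w j))
  (fun w => (seqpre (ys w) j, seqpre (ks w) j, seqpre (zs w) j, seqpre (ss w) j, ks w j))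
  (fun w => zs w j).
have mi_Zt_past_XS := entropy_submod P_ge0 (fun w => zs w j) (fun w => (past j w, ks w j))
  (fun w => (xs w j, ss w j)).
have mi_Yt_past_ZXS := entropy_submod P_ge0 (fun w => ys w j) (fun w => (past j w, ks w j))
  (fun w => (zs w j, xs w j, ss w j)).
have mi_SXZt_Ypast := entropy_submod P_ge0 (fun w => (ss w j, xs w j, zs w j))
  (fun w => seqpre (ys w) j)
  (fun w => (msg w, seqpre (xs w) j, seqpre (ks w) j, seqpre (zs w) j, seqpre (ss w) j,
             ks w j)).
have mi_Yt_Ypast := entropy_submod P_ge0 (fun w => ys w j) (fun w => seqpre (ys w) j)
  (fun w => (msg w, seqpre (xs w) j, seqpre (ks w) j, seqpre (zs w) j, seqpre (ss w) j,
             ks w j, ss w j, xs w j, zs w j)).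
move: channel encoder feedback mi_Zt_past mi_YSt_past mi_Zt_past_XS mi_Yt_past_ZXS
  mi_SXZt_Ypast mi_Yt_Ypast.
rewrite /condMI !(condH_entropy P_ge0) /past.
normalize_entropies j.
lra.
Qed.
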